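(* Consider the convex vector optimization problem of minimizing $f(x)$ with respect to $\le_C$ subject to $h(x)\le 0$ (with $C\subseteq\mathbb{R}^q$ a nontrivial pointed convex cone with nonempty interior, $h:\mathbb{R}^n\to\mathbb{R}^m$ continuous and $\mathbb{R}^m_+$-convex, $f:\mathbb{R}^n\to\mathbb{R}^q$ continuous and $C$-convex), with upper image $\mathcal{P}=\operatorname{cl}(f(\mathcal{X})+C)$, where $\mathcal{X}=\{x\mid h(x)\le0\}$, and let $\mathcal{P}_\infty$ be the recession cone of $\mathcal{P}$. Let $\delta\ge 0$, let $\mathcal{Z}\subseteq\mathbb{R}^q$ be a finite $\delta$-inner approximation of $\mathcal{P}_\infty^+$, and let $\mathcal{Y}\subseteq\mathbb{R}^q$ be a finite set with $(\operatorname{cone}\mathcal{Z})^+=\operatorname{cone}\mathcal{Y}$. Then $\mathcal{Y}$ is a finite $\delta$-outer approximation of $\mathcal{P}_\infty$.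
   Context: Norms are Euclidean, $B(c,r)=\{y\mid\|y-c\|\le r\}$, and $d^H(A,B)=\max\{\sup_{a\in A}\inf_{b\in B}\|a-b\|,\sup_{b\in B}\inf_{a\in A}\|a-b\|\}$ is the Hausdorff distance. For $A\subseteq\mathbb{R}^q$: $A^+=\{w\mid w^\mathsf{T} a\ge0\ \forall a\in A\}$ is the dual cone, $\operatorname{cone}A$ is the set of all finite nonnegative combinations of points of $A$ (with $\operatorname{cone}\emptyset=\{0\}$), and the recession cone is $A_\infty=\{d\mid a+\lambda d\in A\ \forall a\in A,\lambda\ge0\}$. For a convex cone $K\subseteq\mathbb{R}^q$, a finite set $\mathcal{Y}$ is a finite $\delta$-outer approximation of $K$ if $K\subseteq\operatorname{cone}\mathcal{Y}$ and $d^H(K\cap B(0,1),\operatorname{cone}\mathcal{Y}\cap B(0,1))\le\delta$; a finite set $\mathcal{Z}$ is a finite $\delta$-inner approximation of $K$ if $\operatorname{cone}\mathcal{Z}\subseteq K$ and $d^H(K\cap B(0,1),\operatorname{cone}\mathcal{Z}\cap B(0,1))\le\delta$. *)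

From HB Require Import structures.
From mathcomp Require Import all_boot all_order all_algebra.
From mathcomp Require Import all_classical all_reals all_analysis.
Set Implicit Arguments. Unset Strict Implicit. Unset Printing Implicit Defensive.
Import Order.TTheory GRing.Theory Num.Theory.
Import numFieldNormedType.Exports.
Local Open Scope classical_set_scope.
Local Open Scope ring_scope.

Section Defs.
Variable R : realType.

Definition edot {q : nat} (u v : 'rV[R]_q) : R := \sum_(i < q) u 0 i * v 0 i.
Definition enorm {q : nat} (u : 'rV[R]_q) : R := Num.sqrt (edot u u).

Definition eball {q : nat} (c : 'rV[R]_q) (r : R) : set 'rV[R]_q :=
  [set y | enorm (y - c) <= r].

Definition hausdorff {q : nat} (A B : set 'rV[R]_q) : \bar R :=
  maxe (ereal_sup [set ereal_inf [set (enorm (a - b))%:E | b in B] | a in A])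
       (ereal_sup [set ereal_inf [set (enorm (a - b))%:E | a in A] | b in B]).

Definition dual_cone {q : nat} (A : set 'rV[R]_q) : set 'rV[R]_q :=
  [set w | forall a, A a -> 0 <= edot w a].

(* conic hull: all finite nonnegative combinations (cone set0 = [set 0]) *)
Definition cone {q : nat} (A : set 'rV[R]_q) : set 'rV[R]_q :=
  [set x | exists (k : nat) (a : 'I_k -> 'rV[R]_q) (l : 'I_k -> R),
      (forall i, A (a i)) /\ (forall i, 0 <= l i) /\ x = \sum_(i < k) l i *: a i].

Definition recession_cone {q : nat} (A : set 'rV[R]_q) : set 'rV[R]_q :=
  [set d | forall a, A a -> forall lam : R, 0 <= lam -> A (a + lam *: d)].

Definition is_convex_cone {q : nat} (C : set 'rV[R]_q) : Prop :=
  C 0 /\ (forall x y, C x -> C y -> C (x + y)) /\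
  (forall (lam : R) x, 0 <= lam -> C x -> C (lam *: x)).

Definition is_pointed {q : nat} (C : set 'rV[R]_q) : Prop :=
  forall x, C x -> C (- x) -> x = 0.

Definition cone_convex {n q : nat} (C : set 'rV[R]_q) (f : 'rV[R]_n -> 'rV[R]_q) : Prop :=
  forall x y (t : R), 0 <= t <= 1 ->
    C (t *: f x + (1 - t) *: f y - f (t *: x + (1 - t) *: y)).

Definition orthant (m : nat) : set 'rV[R]_m := [set y | forall i, 0 <= y 0 i].

Definition outer_approx {q : nat} (delta : R) (K Y : set 'rV[R]_q) : Prop :=
  finite_set Y /\ K `<=` cone Y /\
  (hausdorff (K `&` eball 0 1) (cone Y `&` eball 0 1) <= delta%:E)%E.

Definition inner_approx {q : nat} (delta : R) (K Z : set 'rV[R]_q) : Prop :=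
  finite_set Z /\ cone Z `<=` K /\
  (hausdorff (K `&` eball 0 1) (cone Z `&` eball 0 1) <= delta%:E)%E.

Definition feasible {n m : nat} (h : 'rV[R]_n -> 'rV[R]_m) : set 'rV[R]_n :=
  [set x | forall i, h x 0 i <= 0].

Definition upper_image {n m q : nat} (C : set 'rV[R]_q)
  (f : 'rV[R]_n -> 'rV[R]_q) (h : 'rV[R]_n -> 'rV[R]_m) : set 'rV[R]_q :=
  closure [set y + c | y in f @` feasible h & c in C].

End Defs.

From HB Require Import structures.
From mathcomp Require Import all_boot all_order all_algebra.
From mathcomp Require Import all_classical all_reals all_analysis.
From mathcomp Require Import ring lra.
Import Order.TTheory GRing.Theory Num.Theory.
Import numFieldNormedType.Exports.
Local Open Scope classical_set_scope.
Local Open Scope ring_scope.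

(* Only one property of the upper image P is used: it is
   closed, so that its recession cone K = P_oo is a closed convex cone.
   The result is then a statement about an arbitrary closed convex cone K
   (outer_approx_of_dual_inner):
   - K is contained in cone Y: from cone Z <= K^+ we get
     K <= (cone Z)^+ = cone Y;
   - every b in cone Y of norm <= 1 decomposes, by projection onto K, as
     b = p + r with p in K, <r, p> = 0 and -r in K^+; the unit vector
     u = -r/|r| lies in K^+, so it is delta-close to some z in cone Z, and
     since <z, b> >= 0 while <u, b> = -|r| we get |r| <= |z - u| <= delta
     (up to an arbitrary epsilon).  As |p| <= |b| <= 1, p is a point of
     K /\ B(0,1) within delta of b. *)

Section InnerProduct.
Context {R : realType} {q : nat}.
Implicit Types (u v w : 'rV[R]_q).

Lemma edotC u v : edot u v = edot v u.
Proof. by apply: eq_bigr => i _; rewrite mulrC. Qed.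

Lemma edotDl u v w : edot (u + v) w = edot u w + edot v w.
Proof. by rewrite /edot -big_split; apply: eq_bigr => i _; rewrite !mxE mulrDl. Qed.

Lemma edotZl (a : R) u w : edot (a *: u) w = a * edot u w.
Proof. by rewrite /edot mulr_sumr; apply: eq_bigr => i _; rewrite !mxE mulrA. Qed.

Lemma edotNl u w : edot (- u) w = - edot u w.
Proof. by rewrite -scaleN1r edotZl mulN1r. Qed.

Lemma edotBl u v w : edot (u - v) w = edot u w - edot v w.
Proof. by rewrite edotDl edotNl. Qed.

Lemma edotDr u v w : edot w (u + v) = edot w u + edot w v.
Proof. by rewrite edotC edotDl !(edotC w). Qed.

Lemma edotZr (a : R) u w : edot w (a *: u) = a * edot w u.
Proof. by rewrite edotC edotZl edotC. Qed.

Lemma edotNr u w : edot w (- u) = - edot w u.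
Proof. by rewrite edotC edotNl edotC. Qed.

Lemma edotBr u v w : edot w (u - v) = edot w u - edot w v.
Proof. by rewrite edotDr edotNr. Qed.

Lemma edot0l w : edot 0 w = 0.
Proof. by rewrite /edot big1 // => i _; rewrite mxE mul0r. Qed.

Lemma edot_ge0 u : 0 <= edot u u.
Proof. by apply: sumr_ge0 => i _; rewrite -expr2 sqr_ge0. Qed.

Lemma edot_gt0 u : u != 0 -> 0 < edot u u.
Proof.
move=> u0; rewrite lt_def edot_ge0 andbT; apply: contraNneq u0 => uu0.
apply/eqP/rowP => i; rewrite mxE.
have /eqP := @psumr_eq0P R _ xpredT (fun i => u 0 i * u 0 i)
  (fun i _ => ltac:(by rewrite /= -expr2 sqr_ge0)) uu0 i isT.
by rewrite mulf_eq0 orbb => /eqP.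
Qed.

Lemma coord_le_edot u i : (u 0 i) ^+ 2 <= edot u u.
Proof.
rewrite /edot (bigD1 i) //= -expr2 lerDl.
by apply: sumr_ge0 => j _; rewrite -expr2 sqr_ge0.
Qed.

Lemma enorm_sqr u : enorm u ^+ 2 = edot u u.
Proof. by rewrite sqr_sqrtr // edot_ge0. Qed.

Lemma enorm_le1 u : (enorm u <= 1) = (edot u u <= 1).
Proof. by rewrite /enorm -{1}sqrtr1 ler_sqrt. Qed.

Lemma enorm0 : enorm (0 : 'rV[R]_q) = 0.
Proof. by rewrite /enorm edot0l sqrtr0. Qed.

Lemma enormB u v : enorm (u - v) = enorm (v - u).
Proof. by rewrite /enorm -opprB edotNl edotNr opprK. Qed.

Lemma edot_le_enorm v b : edot b b <= 1 -> edot v b <= enorm v.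
Proof.
move=> hb; have [->|v0] := eqVneq v 0; first by rewrite edot0l sqrtr_ge0.
have n0 : 0 < enorm v by rewrite sqrtr_gt0 edot_gt0.
have := edot_ge0 (v - enorm v *: b).
rewrite !edotBl !edotBr !edotZl !edotZr (edotC b v) -enorm_sqr; nra.
Qed.

Lemma edot_sub_sqr u v (t : R) :
  edot (u - t *: v) (u - t *: v) = edot u u - 2 * t * edot u v + t ^+ 2 * edot v v.
Proof. rewrite !edotBl !edotBr !edotZl !edotZr (edotC v u); ring. Qed.

Lemma edot_add_sqr u v (t : R) :
  edot (u + t *: v) (u + t *: v) = edot u u + 2 * t * edot u v + t ^+ 2 * edot v v.
Proof. rewrite !edotDl !edotDr !edotZl !edotZr (edotC v u); ring. Qed.

Lemma edot_pythagoras u v : edot u v = 0 -> edot (u + v) (u + v) = edot u u + edot v v.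
Proof. by move=> uv; rewrite edotDl !edotDr (edotC v u) uv; ring. Qed.

Lemma sqr_dist_continuous y : continuous (fun a : 'rV[R]_q => edot (y - a) (y - a)).
Proof.
have -> : (fun a : 'rV[R]_q => edot (y - a) (y - a)) =
   \sum_(i < q) (fun a : 'rV[R]_q => (y 0 i - a 0 i) * (y 0 i - a 0 i)).
  by rewrite fct_sumE; apply: funext => a; apply: eq_bigr => i _; rewrite !mxE.
elim/big_ind: _ => [|f g cf cg x|i _ x]; first exact: cst_continuous.
  exact: continuousD (cf x) (cg x).
have hc : {for x, continuous (fun a : 'rV[R]_q => y 0 i - a 0 i)}.
  apply: (@continuousB _ _ _ (fun=> y 0 i) (fun a : 'rV[R]_q => a 0 i)).
    exact: cst_continuous.
  exact: coord_continuous.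
exact: (continuousM hc hc).
Qed.

End InnerProduct.

Section ConeProjection.
Context {R : realType} {q : nat}.

Lemma ge0_of_small_param {a b : R} : 0 <= b ->
  (forall t, 0 < t -> t <= 1 -> 0 <= t * a + t ^+ 2 * b) -> 0 <= a.
Proof.
move=> b0 H; rewrite leNgt; apply/negP => a0.
have c0 : 0 < b - a by lra.
pose t := - a / (b - a).
have tc : t * (b - a) = - a by rewrite /t mulfVK // gt_eqF.
have t0 : 0 < t by rewrite /t divr_gt0 // oppr_gt0.
have t1 : t <= 1 by rewrite /t ler_pdivrMr // mul1r; lra.
have e : t * a + t ^+ 2 * b = t ^+ 2 * a.
  by have := congr1 (fun x => t * x) tc; rewrite expr2 /=; nra.
have t20 : 0 < t ^+ 2 by rewrite exprn_gt0.
by have := H t t0 t1; rewrite e; nra.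
Qed.

Lemma sublevel_dist_bounded (y : 'rV[R]_q) :
  bounded_set [set a : 'rV[R]_q | edot (y - a) (y - a) <= edot y y].
Proof.
have S0 := edot_ge0 y.
exists (2 + 2 * edot y y); split; first by rewrite num_real.
move=> M hM a /= ga; rewrite [leLHS]/Num.norm /= mx_normrE.
apply/bigmax_leP; split => [|[i j] _ /=]; first lra.
rewrite (ord1 i); have h1 := coord_le_edot (y - a) j; rewrite !mxE in h1.
have h2 := coord_le_edot y j.
set c := y 0 j in h1 h2 *; set x := a 0 j in h1 *.
have k1 : 2 * (c - x) <= 1 + (c - x) ^+ 2 by have := sqr_ge0 (c - x - 1); nra.
have k2 : 2 * (x - c) <= 1 + (c - x) ^+ 2 by have := sqr_ge0 (c - x + 1); nra.
have k3 : 2 * c <= 1 + c ^+ 2 by have := sqr_ge0 (c - 1); nra.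
have k4 : - 2 * c <= 1 + c ^+ 2 by have := sqr_ge0 (c + 1); nra.
rewrite ler_norml; apply/andP; split; lra.
Qed.

Lemma nearest_point {K : set 'rV[R]_q} (y : 'rV[R]_q) : closed K -> K 0 ->
  exists2 p, K p & forall k, K k -> edot (y - p) (y - p) <= edot (y - k) (y - k).
Proof.
move=> Kcl K0; pose g a := edot (y - a) (y - a).
have g0 : g 0 = edot y y by rewrite /g subr0.
pose A := K `&` [set a | g a <= g 0].
have Acl : closed A.
  apply: closedI => //; apply: (preimage_closed (f := g) (D := [set x | x <= g 0])).
    by move=> x _; exact: sqr_dist_continuous.
  exact: closed_le.
have Abd : bounded_set A.
  have [M [Mreal hM]] := sublevel_dist_bounded y.
  by exists M; split=> // x Mx a [_ ga]; apply: (hM x Mx a); rewrite /= -g0.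
have [p] := EVT_min_rV (ex_intro _ 0 (conj K0 (lexx _)))
  (bounded_closed_compact Abd Acl)
  (@continuous_subspaceT _ _ A g (sqr_dist_continuous y)).
rewrite inE => -[Kp _] pmin; exists p => // k Kk.
have [gk|gk] := leP (g k) (g 0); first by apply: pmin; rewrite inE.
by apply: le_trans (ltW gk); apply: pmin; rewrite inE; split => //=.
Qed.

Lemma cone_projection {K : set 'rV[R]_q} (y : 'rV[R]_q) :
  closed K -> is_convex_cone K ->
  exists2 p, K p & (forall k, K k -> edot (y - p) k <= 0) /\ edot (y - p) p = 0.
Proof.
move=> Kcl [K0 [KD KZ]]; have [p Kp pmin] := nearest_point y Kcl K0.
set r := y - p.
have rk : forall k, K k -> edot r k <= 0.
  move=> k Kk.
  suff : 0 <= - (2 * edot r k) by lra.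
  apply: (ge0_of_small_param (edot_ge0 k)) => t t0 t1.
  have := pmin _ (KD _ _ Kp (KZ _ _ (ltW t0) Kk)).
  rewrite (_ : y - (p + t *: k) = r - t *: k) ?edot_sub_sqr; last first.
    by rewrite /r opprD addrA.
  nra.
exists p => //; split => //; apply/eqP; rewrite eq_le rk //=.
suff : 0 <= 2 * edot r p by lra.
apply: (ge0_of_small_param (edot_ge0 p)) => t t0 t1.
have := pmin _ (KZ (1 - t) _ ltac:(lra) Kp).
rewrite (_ : y - (1 - t) *: p = r + t *: p) ?edot_add_sqr; last first.
  by rewrite /r scalerBl scale1r opprB addrA addrAC.
nra.
Qed.

End ConeProjection.

Section Hausdorff.
Context {R : realType} {q : nat}.
Implicit Types (A B : set 'rV[R]_q).

Lemma hausdorff_le {A B} {d : R} :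
  (forall a, A a -> exists2 b, B b & enorm (a - b) <= d) ->
  (forall b, B b -> exists2 a, A a & enorm (a - b) <= d) ->
  (hausdorff A B <= d%:E)%E.
Proof.
move=> hAB hBA; rewrite /hausdorff ge_max; apply/andP; split;
  apply: ge_ereal_sup => _ [x Sx <-].
- have [y By xy] := hAB x Sx.
  apply: (@le_trans _ _ (enorm (x - y))%:E); last by rewrite lee_fin.
  by apply: ereal_inf_lbound; exists y.
- have [y Ay yx] := hBA x Sx.
  apply: (@le_trans _ _ (enorm (y - x))%:E); last by rewrite lee_fin.
  by apply: ereal_inf_lbound; exists y.
Qed.

Lemma hausdorff_near {A B} {d : R} {a} : (hausdorff A B <= d%:E)%E -> A a ->
  forall e, 0 < e -> exists2 b, B b & enorm (a - b) < d + e.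
Proof.
rewrite /hausdorff ge_max => /andP[hAB _] Aa e e0.
have : (ereal_inf [set (enorm (a - b))%:E | b in B] < (d + e)%:E)%E.
  apply: le_lt_trans (le_trans (ereal_sup_ubound _) hAB) _; first by exists a.
  by rewrite lte_fin ltrDl.
by move=> /ereal_inf_lt [_ [b Bb <-]]; rewrite lte_fin; exists b.
Qed.

End Hausdorff.

Section RecessionCone.
Context {R : realType} {q : nat}.

Lemma recession_cone_convex (P : set 'rV[R]_q) : is_convex_cone (recession_cone P).
Proof.
split; first by move=> a Pa lam _; rewrite scaler0 addr0.
split=> [u v Ku Kv a Pa lam l0|l u l0 Ku a Pa lam lam0].
  by rewrite scalerDr addrA; apply: Kv => //; exact: Ku.
by rewrite scalerA; apply: Ku => //; exact: mulr_ge0.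
Qed.

(* The recession cone of a closed set is an intersection of closed
   preimages, hence closed. *)
Lemma recession_cone_closed (P : set 'rV[R]_q) : closed P -> closed (recession_cone P).
Proof.
move=> Pcl.
have -> : recession_cone P = \bigcap_(i in [set i : 'rV[R]_q * R | P i.1 /\ 0 <= i.2])
    ((fun d => i.1 + i.2 *: d) @^-1` P).
  apply/seteqP; split => d /= Hd; first by move=> [a lam] /= [Pa l0]; exact: Hd.
  by move=> a Pa lam l0; exact: (Hd (a, lam)).
apply: closed_bigI => -[a lam] _; apply: preimage_closed => // x _.
apply: (@continuousD _ _ _ (fun=> a) (fun d => lam *: d)); first exact: cst_continuous.
by apply: (@continuousZ _ _ _ (fun=> lam) id); [exact: cst_continuous | exact: cvg_id].
Qed.

End RecessionCone.

Section DualApproximation.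
Context {R : realType} {q : nat} {K Z : set 'rV[R]_q} {delta : R}.
Hypothesis delta_ge0 : 0 <= delta.
Hypothesis ZK : cone Z `<=` dual_cone K.
Hypothesis hZ :
  (hausdorff (dual_cone K `&` eball 0 1) (cone Z `&` eball 0 1) <= delta%:E)%E.

Lemma sub_dual_cone : K `<=` dual_cone (cone Z).
Proof. by move=> d Kd z Zz; rewrite edotC; exact: ZK. Qed.

Lemma residual_le {b r : 'rV[R]_q} :
  dual_cone (cone Z) b -> edot b b <= 1 ->
  (forall k, K k -> edot r k <= 0) -> edot r (b - r) = 0 -> enorm r <= delta.
Proof.
move=> Zb b1 rK rp; have [->|r0] := eqVneq r 0; first by rewrite enorm0.
have nr0 : 0 < enorm r by rewrite sqrtr_gt0 edot_gt0.
set u := (- (enorm r)^-1) *: r.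
have uK : dual_cone K u.
  move=> k Kk; rewrite /u edotZl mulNr -mulrN.
  by rewrite mulr_ge0 ?invr_ge0 ?oppr_ge0 ?rK // ltW.
have uB : eball 0 1 u.
  rewrite /eball /= subr0 enorm_le1 /u edotZl edotZr -enorm_sqr.
  by rewrite mulrA -expr2 sqrrN exprVn mulVf // expf_neq0 // gt_eqF.
have ub : edot u b = - enorm r.
  have rb : edot r b = enorm r ^+ 2 by rewrite -[b](subrK r) edotDr rp add0r enorm_sqr.
  by rewrite /u edotZl rb expr2 mulNr mulrA mulVf ?gt_eqF // mul1r.
apply/ler_addgt0Pr => e e0.
have [z [Zz _] uz] := hausdorff_near hZ (conj uK uB) e e0.
have zb : 0 <= edot z b by rewrite edotC; exact: Zb.
have := edot_le_enorm (z - u) b b1; rewrite edotBl enormB.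
lra.
Qed.

End DualApproximation.

Theorem outer_approx_of_dual_inner {R : realType} {q : nat}
    {K Z Y : set 'rV[R]_q} {delta : R} : 0 <= delta ->
  closed K -> is_convex_cone K ->
  inner_approx delta (dual_cone K) Z -> finite_set Y -> dual_cone (cone Z) = cone Y ->
  outer_approx delta K Y.
Proof.
move=> d0 Kcl Kcvx [_ [ZK hZ]] finY hY.
have KY : K `<=` cone Y by rewrite -hY; exact: sub_dual_cone.
split=> //; split=> //; apply: hausdorff_le => [a [Ka Ba]|b [Yb Bb]].
  by exists a; [split=> //; exact: KY | rewrite subrr enorm0].
rewrite -hY in Yb; have b1 : edot b b <= 1 by rewrite -enorm_le1 -[b]subr0.
have [p Kp [rK rp]] := cone_projection b Kcl Kcvx.
have rr : enorm (b - p) <= delta.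
  by apply: (residual_le d0 hZ Yb b1 rK); rewrite subKr.
have bE : edot b b = edot p p + edot (b - p) (b - p).
  by rewrite -edot_pythagoras ?subrKC // edotC.
exists p; last by rewrite enormB.
split=> //; rewrite /eball /= subr0 enorm_le1.
by have := edot_ge0 (b - p); lra.
Qed.

Theorem proposition4p4 (R : realType) (n m q : nat)
  (C : set 'rV[R]_q) (f : 'rV[R]_n -> 'rV[R]_q) (h : 'rV[R]_n -> 'rV[R]_m)
  (delta : R) (Z Y : set 'rV[R]_q) :
  is_convex_cone C -> is_pointed C -> C <> [set 0] -> C <> setT ->
  interior C !=set0 ->
  continuous h -> cone_convex (@orthant R m) h ->
  continuous f -> cone_convex C f ->
  0 <= delta ->
  inner_approx delta (dual_cone (recession_cone (upper_image C f h))) Z ->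
  finite_set Y -> dual_cone (cone Z) = cone Y ->
  outer_approx delta (recession_cone (upper_image C f h)) Y.
Proof.
move=> _ _ _ _ _ _ _ _ _ d0 hZ finY hY.
(* The upper image is a closure, so its recession cone is a closed convex cone. *)
apply: (@outer_approx_of_dual_inner _ _ _ _ _ _ d0 _ _ hZ finY hY).
  apply: recession_cone_closed; exact: closed_closure.
exact: recession_cone_convex.
Qed.
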